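(* Let $d$ be a prime power, $\mathbb{F}_d$ the finite field with $d$ elements, and $(p_{nm})_{n,m\in\mathbb{F}_d}$ a probability distribution on $\mathbb{F}_d\times\mathbb{F}_d$ (the Bell-diagonal probabilities of a two-qudit state, with $p_{00}$ the initial fidelity). Let $L_1,\dots,L_{d+1}$ be the sums of $p_{nm}$ over the $d+1$ lines through the origin, $\{(0,k):k\in\mathbb{F}_d\}$ and $\{(k,ak):k\in\mathbb{F}_d\}$ for $a\in\mathbb{F}_d$ (the weights of the $d+1$ mutually unbiased bases). If $p_{00}>\frac{d-1}{2d}$, then $\max_i L_i>1/2$; that is, the MUB-adapted mCAEPP satisfies the spectral dominance condition, so $p_{00}>\frac{d-1}{2d}$ is a sufficient initial-fidelity threshold for the MUB pre-processing strategy.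
   Context: Spectral dominance condition: after rotating the MUB line of maximal weight onto the primary (computational) axis by local operations, that primary axis carries weight $L_{\max}>1/2$. *)

From mathcomp Require Import all_boot all_order all_algebra all_field.
Set Implicit Arguments. Unset Strict Implicit. Unset Printing Implicit Defensive.
Import Order.TTheory GRing.Theory Num.Theory.
Local Open Scope ring_scope.

(* Lines through the origin of F x F, indexed by option F:
   None    |-> {(0,k) : k in F}
   Some a  |-> {(k, a k) : k in F}. *)
Definition line_weight (F : finFieldType) (R : realFieldType)
  (p : F -> F -> R) (l : option F) : R :=
  match l with
  | None => \sum_(k : F) p 0 k
  | Some a => \sum_(k : F) p k (a * k)
  end.

(* L_max = max over the d+1 lines (weights are nonnegative, so 0 is a neutral start). *)
Definition L_max (F : finFieldType) (R : realFieldType) (p : F -> F -> R) : R :=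
  \big[Num.max/0]_(l : option F) line_weight p l.

From mathcomp Require Import all_boot all_order all_algebra all_field.
From mathcomp Require Import lra.
Set Implicit Arguments. Unset Strict Implicit. Unset Printing Implicit Defensive.
Import Order.TTheory GRing.Theory Num.Theory.
Local Open Scope ring_scope.

(* Every point of F x F other than the origin lies on exactly one of the d+1
   lines through the origin, while the origin lies on all of them.  Hence the
   line weights add up to 1 + d p00, so the heaviest line weighs at least
   (1 + d p00)/(d + 1), which exceeds 1/2 exactly when p00 > (d-1)/(2d). *)

Section LineWeights.

Variables (F : finFieldType) (R : realFieldType) (p : F -> F -> R).

Lemma sum_line_weight_Some :
  \sum_(a : F) line_weight p (Some a) =
  #|F|%:R * p 0 0 + \sum_(n | n != 0) \sum_(m : F) p n m.
Proof.
rewrite /line_weight exchange_big (bigD1 0) //=.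
under eq_bigr do rewrite mulr0.
congr (_ + _); first by rewrite sumr_const mulr_natl.
(* for n != 0, a |-> a * n permutes F *)
by apply: eq_bigr => n n0; rewrite [RHS](reindex_inj (mulIf n0)).
Qed.

Lemma sum_line_weight :
  \sum_(l : option F) line_weight p l =
  \sum_(n : F) \sum_(m : F) p n m + #|F|%:R * p 0 0.
Proof.
rewrite (bigD1 None) //= (reindex_onto Some (odflt 0)) /=; last by case.
rewrite [X in _ + X](eq_bigl xpredT); last by move=> a; rewrite eqxx.
rewrite sum_line_weight_Some [in RHS](bigD1 0) //=; lra.
Qed.

Lemma sum_line_weight_le_L_max :
  \sum_(l : option F) line_weight p l <= #|F|.+1%:R * L_max p.
Proof.
rewrite -card_option mulr_natl -sumr_const.
apply: ler_sum => l _; exact: le_bigmax.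
Qed.

End LineWeights.

Theorem theorem3 (F : finFieldType) (R : realFieldType) (p : F -> F -> R)
  (p_ge0 : forall n m, 0 <= p n m)
  (p_sum1 : \sum_(n : F) \sum_(m : F) p n m = 1)
  (hfid : (#|F|%:R - 1) / (2 * #|F|%:R) < p 0 0) :
  1 / 2 < L_max p.
Proof.
have := sum_line_weight_le_L_max p.
rewrite sum_line_weight p_sum1 mulrS mulr_natl.
have d_gt0 : (0 : R) < #|F|%:R by rewrite ltr0n; apply/card_gt0P; exists 0.
move: hfid; rewrite ltr_pdivrMr ?mulr_gt0 //.
set d : R := #|F|%:R; nra.
Qed.
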